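(* Let $(X,d,f)$ be a TDS, $\mu\in\mathcal M(X)$, $K\subset X$ a Borel set, $\alpha\ge0$, and $\varphi\in C(X,\mathbb R)$ with $\varphi>0$. For each $s\in(0,\infty)$: (1) if $P^\alpha_\mu(f,x,\varphi)\le s$ for all $x\in K$, then $\dim^\alpha_{BS}(f,K,\varphi)\le s$; (2) if $P^\alpha_\mu(f,x,\varphi)\ge s$ for all $x\in K$ and $\mu(K)>0$, then $\dim^\alpha_{BS}(f,K,\varphi)\ge s$.
   Context: A TDS $(X,d,f)$: compact metric space and continuous $f$; $\mathcal M(X)$ is the set of Borel probability measures on $X$. $S_n\varphi(x)=\sum_{j=0}^{n-1}\varphi(f^jx)$; $d_n^\alpha(x,y)=\max_{0\le i\le n-1}e^{\alpha i}d(f^ix,f^iy)$; $B_n^\alpha(x,\varepsilon)=\{y:d_n^\alpha(x,y)<\varepsilon\}$. $\alpha$-BS dimension: $M^\alpha(K,s,\varepsilon,n,\varphi)=\inf\sum_i\exp\big(-s\sup_{y\in B^\alpha_{n_i}(x_i,\varepsilon)}S_{n_i}\varphi(y)\big)$ over finite or countable families $\{B^\alpha_{n_i}(x_i,\varepsilon)\}$, $x_i\in X$, $n_i\ge n$, covering $K$; $M^\alpha(K,s,\varepsilon,\varphi)=\lim_n M^\alpha(K,s,\varepsilon,n,\varphi)$; $M^\alpha(K,\varepsilon,\varphi)=\inf\{s:M^\alpha(K,s,\varepsilon,\varphi)=0\}=\sup\{s:M^\alpha(K,s,\varepsilon,\varphi)=\infty\}$; $\dim^\alpha_{BS}(f,K,\varphi)=\lim_{\varepsilon\to0}M^\alpha(K,\varepsilon,\varphi)$.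 Pointwise $\alpha$-local Brin–Katok entropy: $P^\alpha_\mu(f,x,\varphi)=\lim_{\varepsilon\to0}\liminf_{n\to\infty}\frac{-\log\mu(B_n^\alpha(x,\varepsilon))}{S_n\varphi(x)}$. *)

From HB Require Import structures.
From mathcomp Require Import all_boot all_order all_algebra.
From mathcomp Require Import all_classical all_reals all_analysis.
Set Implicit Arguments. Unset Strict Implicit. Unset Printing Implicit Defensive.
Import Order.TTheory GRing.Theory Num.Theory numFieldNormedType.Exports.
Local Open Scope classical_set_scope.
Local Open Scope ring_scope.

(* Metric spaces with a distinguished point.  MathComp-Analysis measurable
   types are required to be pointed; since X carries a probability measure it
   is nonempty, so this costs nothing. *)
#[short(type="pmetricType")]
HB.structure Definition PointedMetric (K : numDomainType) :=
  {T of Pointed T & Metric K T}.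

Section Defs.
Context {R : realType} {X : pmetricType R}.

Definition borel_type := g_sigma_algebraType (@open X).

Definition birkhoff_sum (f : X -> X) (phi : X -> R) (n : nat) (x : X) : R :=
  \sum_(j < n) phi (iter j f x).

Definition dn_alpha (f : X -> X) (alpha : R) (n : nat) (x y : X) : R :=
  \big[Num.max/0]_(i < n) (expR (alpha * i%:R) * mdist (iter i f x) (iter i f y)).

Definition bowen_ball (f : X -> X) (alpha : R) (n : nat) (x : X) (eps : R) : set X :=
  [set y | dn_alpha f alpha n x y < eps].

Local Open Scope ereal_scope.

Definition ball_weight (f : X -> X) (alpha : R) (phi : X -> R) (s eps : R)
    (m : nat) (x : X) : \bar R :=
  expeR ((- s)%:E *
    ereal_sup [set (birkhoff_sum f phi m y)%:E | y in bowen_ball f alpha m x eps]).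

Definition M_n (f : X -> X) (alpha : R) (phi : X -> R) (K : set X) (s eps : R)
    (n : nat) : \bar R :=
  ereal_inf [set v | exists (I : set nat) (ns : nat -> nat) (xs : nat -> X),
      [/\ (forall i, I i -> (n <= ns i)%N),
           K `<=` \bigcup_(i in I) bowen_ball f alpha (ns i) (xs i) eps &
           v = \esum_(i in I) ball_weight f alpha phi s eps (ns i) (xs i)]].

Definition M_s (f : X -> X) (alpha : R) (phi : X -> R) (K : set X) (s eps : R) : \bar R :=
  limn (fun n => M_n f alpha phi K s eps n).

Definition M_eps (f : X -> X) (alpha : R) (phi : X -> R) (K : set X) (eps : R) : \bar R :=
  ereal_inf [set s%:E | s in [set s : R | M_s f alpha phi K s eps = 0]].

Definition dim_BS (f : X -> X) (alpha : R) (phi : X -> R) (K : set X) : \bar R :=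
  lim (M_eps f alpha phi K eps @[eps --> 0%R^'+]).

Definition local_BK_entropy (f : X -> X) (alpha : R) (phi : X -> R)
    (mu : set borel_type -> \bar R) (x : X) : \bar R :=
  lim ((fun eps : R => limn_einf (fun n =>
          (- lne (mu (bowen_ball f alpha n x eps))) *
          ((birkhoff_sum f phi n x)^-1)%:E)) eps @[eps --> 0%R^'+]).

End Defs.

(* Let m > 0 be the minimum of phi on the compact space X.

   Upper bound: if P(x) <= s on K then, for every scale eps and every N, each
   x in K has a length n >= N with mu (B_n(x, eps)) >= exp(-(s + dl) S_n x).
   Selecting greedily, length by length, maximal disjoint families of such
   heavy balls (finitely many per length, as mu is a probability), the selected
   balls of doubled radius cover K, and at exponent s + 2 dl each weighs at most
   exp(- dl m N) times its mass; the masses add up to at most 1, so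
   M(K, s + 2 dl, 2 eps) = 0.

   Lower bound: if P(x) > beta on K, countable subadditivity of the outer
   measure yields a scale eps, a time N and a part K' of K of positive outer
   measure on which mu (B_n(x, eps)) <= exp(- beta S_n x) for n >= N. By uniform
   continuity of phi, S_n varies by at most n th on Bowen balls of a small
   radius r, so for t < beta close enough the weight at exponent t of any such
   ball meeting K' dominates its measure; hence M_n(K, t, r) >= mu^*(K') > 0 and
   the dimension is at least t. *)

From HB Require Import structures.
From mathcomp Require Import all_boot all_order all_algebra.
From mathcomp Require Import all_classical all_reals all_analysis.
From mathcomp Require Import ring lra finmap.
Set Implicit Arguments. Unset Strict Implicit. Unset Printing Implicit Defensive.
Import Order.TTheory GRing.Theory Num.Theory numFieldNormedType.Exports.
Local Open Scope classical_set_scope.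
Local Open Scope ring_scope.

Section bowen_metric.
Context {R : realType} {X : pmetricType R} (f : X -> X) (alpha : R).

Local Notation dn := (dn_alpha f alpha).
Local Notation B := (bowen_ball f alpha).

Lemma dn_alpha_ge0 n x y : 0 <= dn n x y.
Proof.
rewrite /dn_alpha; elim/big_ind: _ => // [a b a0 b0|i _].
  by rewrite le_max a0.
by rewrite mulr_ge0 ?expR_ge0 ?mdist_ge0.
Qed.

Lemma le_dn_alpha n x y (i : 'I_n) :
  expR (alpha * i%:R) * mdist (iter i f x) (iter i f y) <= dn n x y.
Proof.
exact: (le_bigmax _
  (fun i : 'I_n => expR (alpha * i%:R) * mdist (iter i f x) (iter i f y))).
Qed.

Lemma dn_alpha_le n x y c : 0 <= c ->
  (forall i : 'I_n, expR (alpha * i%:R) * mdist (iter i f x) (iter i f y) <= c) ->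
  dn n x y <= c.
Proof. by move=> c0 le_c; apply/bigmax_leP. Qed.

Lemma dn_alphaxx n x : dn n x x = 0.
Proof.
apply/eqP; rewrite eq_le dn_alpha_ge0 andbT.
by apply: dn_alpha_le => // i; rewrite mdistxx mulr0.
Qed.

Lemma dn_alphaC n x y : dn n x y = dn n y x.
Proof. by apply: eq_bigr => i _; rewrite metric_sym. Qed.

Lemma dn_alpha_triangle n x y z : dn n x z <= dn n x y + dn n y z.
Proof.
apply: dn_alpha_le => [|i]; first by rewrite addr_ge0 ?dn_alpha_ge0.
apply: le_trans (lerD (le_dn_alpha x y i) (le_dn_alpha y z i)).
by rewrite -mulrDr ler_wpM2l ?expR_ge0 ?metric_triangle.
Qed.

Lemma dn_alpha_le_length m n x y : (m <= n)%N -> dn m x y <= dn n x y.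
Proof.
move=> mn; apply: dn_alpha_le => [|i]; first exact: dn_alpha_ge0.
exact: (le_dn_alpha x y (Ordinal (leq_trans (ltn_ord i) mn))).
Qed.

Lemma mdist_iter_le_dn_alpha n x y j : 0 <= alpha -> (j < n)%N ->
  mdist (iter j f x) (iter j f y) <= dn n x y.
Proof.
move=> alpha0 jn; apply: le_trans (le_dn_alpha x y (Ordinal jn)).
by rewrite ler_peMl ?mdist_ge0 // -expR0 ler_expR mulr_ge0.
Qed.

Lemma bowen_ball_center n x e : 0 < e -> B n x e x.
Proof. by move=> e0; rewrite /bowen_ball /= dn_alphaxx. Qed.

Lemma sub_bowen_ball_radius n x e1 e2 : e1 <= e2 -> B n x e1 `<=` B n x e2.
Proof. by move=> e12 y /lt_le_trans; apply. Qed.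

Lemma sub_bowen_ball_length m n x e : (m <= n)%N -> B n x e `<=` B m x e.
Proof. by move=> mn y; apply: le_lt_trans; apply: dn_alpha_le_length. Qed.

Lemma bowen_ballC n x y e : B n x e y = B n y e x.
Proof. by rewrite /bowen_ball /= dn_alphaC. Qed.

Lemma bowen_ball_triangle n x y z e1 e2 :
  B n x e1 y -> B n y e2 z -> B n x (e1 + e2) z.
Proof. by move=> xy yz; apply: le_lt_trans (dn_alpha_triangle n x y z) (ltrD xy yz). Qed.


End bowen_metric.

Section birkhoff_sum.
Context {R : realType} {X : pmetricType R} (f : X -> X) (phi : X -> R).

Local Notation S := (birkhoff_sum f phi).

Let sumr_const_ord n (c : R) : \sum_(i < n) c = n%:R * c.
Proof. by rewrite sumr_const card_ord mulr_natl. Qed.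

Lemma birkhoff_sum_ge n x c : (forall y, c <= phi y) -> n%:R * c <= S n x.
Proof.
move=> c_le; rewrite -sumr_const_ord.
by apply: ler_sum => i _.
Qed.

Lemma birkhoff_sum_le n x c : (forall y, phi y <= c) -> S n x <= n%:R * c.
Proof.
move=> le_c; rewrite -sumr_const_ord.
by apply: ler_sum => i _.
Qed.

Lemma birkhoff_sum_ge0 n x : (forall y, 0 <= phi y) -> 0 <= S n x.
Proof. by move=> phi0; apply: sumr_ge0 => i _. Qed.

Lemma birkhoff_sum_gt0 n x c : 0 < c -> (forall y, c <= phi y) -> (0 < n)%N ->
  0 < S n x.
Proof.
move=> c0 c_le n0; apply: lt_le_trans (birkhoff_sum_ge n x c_le).
by rewrite mulr_gt0 ?ltr0n.
Qed.

Lemma birkhoff_sum_le_near alpha n y z rho th : 0 <= alpha ->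
  (forall u v, mdist u v < rho -> `|phi u - phi v| < th) ->
  dn_alpha f alpha n y z < rho -> S n z <= S n y + n%:R * th.
Proof.
move=> alpha0 phi_near yz.
rewrite -sumr_const_ord -big_split /=.
apply: ler_sum => i _.
have := le_lt_trans (mdist_iter_le_dn_alpha _ _ _ alpha0 (ltn_ord i)) yz.
move=> /phi_near/ltr_normlP[].
lra.
Qed.

End birkhoff_sum.

Section topology.
Context {R : realType} {X : pmetricType R}.

Lemma continuous_mdist (a : X) : continuous (fun z : X => mdist a z).
Proof.
move=> z; apply/cvgrPdist_lt => e e0; apply/nbhs_ballP; exists e => // w.
rewrite ballEmdist /= => zw; rewrite ltr_norml.
have := metric_triangle a z w; have := metric_triangle a w z.
rewrite (metric_sym w z) => ? ?; apply/andP; split; lra.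
Qed.

Lemma continuous_iter (g : X -> X) j : continuous g -> continuous (iter j g).
Proof.
move=> gc; elim: j => [|j IH] x /=; first exact: cvg_id.
exact: (continuous_comp (IH x) (gc _)).
Qed.

Lemma continuous_bigmax (I : Type) (r : seq I) (G : I -> X -> R) :
  (forall i, continuous (G i)) ->
  continuous (fun y => \big[Num.max/0]_(i <- r) G i y).
Proof.
move=> Gc; elim: r => [|a r IH].
  under eq_fun do rewrite big_nil; exact: cst_continuous.
under eq_fun do rewrite big_cons; exact: max_fun_continuous.
Qed.

Lemma continuous_dn_alpha (f : X -> X) alpha n x : continuous f ->
  continuous (dn_alpha f alpha n x).
Proof.
move=> fc; apply: (@continuous_bigmax _ (index_enum 'I_n)
  (fun (i : 'I_n) y => expR (alpha * i%:R) * mdist (iter i f x) (iter i f y))).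
move=> i y; apply: (@continuousM _ _ (fun=> _) (fun y => mdist (iter i f x) (iter i f y))).
  exact: cst_continuous.
exact: (continuous_comp (continuous_iter (j:=i) fc (x:=y))
  (continuous_mdist (a:=iter i f x) (x:=iter i f y))).
Qed.

Lemma open_bowen_ball (f : X -> X) alpha n x e : continuous f ->
  open (bowen_ball f alpha n x e).
Proof.
move=> fc; apply: (@open_comp _ _ _ [set r | r < e]); last exact: open_lt.
by move=> y _; apply: continuous_dn_alpha.
Qed.

Lemma measurable_bowen_ball (f : X -> X) alpha n x e : continuous f ->
  measurable (bowen_ball f alpha n x e : set (@borel_type R X)).
Proof. by move=> fc; apply: sub_sigma_algebra; apply: open_bowen_ball. Qed.

Lemma seq_lower_bound (s : seq X) (g : X -> R) : (forall x, 0 < g x) ->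
  exists2 c, 0 < c & forall x, x \in s -> c <= g x.
Proof.
move=> g0; elim: s => [|a s [c c0 le_c]]; first by exists 1.
exists (Num.min (g a) c); first by rewrite lt_min g0 c0.
move=> x; rewrite inE => /orP[/eqP->|xs]; first by rewrite ge_min lexx.
by rewrite ge_min le_c ?orbT.
Qed.

Lemma compact_unif_continuous (g : X -> R) : compact [set: X] -> continuous g ->
  forall th, 0 < th -> exists2 rho, 0 < rho &
    forall y z, mdist y z < rho -> `|g y - g z| < th.
Proof.
move=> cX gc th th0.
have radius x : {r : R | 0 < r /\ forall y, mdist x y < r -> `|g x - g y| < th / 2}.
  apply: cid; have /cvgrPdist_lt/(_ (th / 2)) := gc x.
  rewrite divr_gt0 // => /(_ isT)/nbhs_ballP[r r0 near_x].
  by exists r; split => // y xy; apply: near_x; rewrite ballEmdist.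
pose r x := sval (radius x).
have [r0 rP] : (forall x, 0 < r x) /\
    forall x y, mdist x y < r x -> `|g x - g y| < th / 2.
  by split => x; have [] := svalP (radius x).
move: cX; rewrite compact_cover => /(_ X setT
  (fun x => [set y | mdist x y < r x / 2])) [x _|y _|D _ cover].
- apply: (@open_comp _ _ _ [set u | u < r x / 2]); last exact: open_lt.
  by move=> y _; apply: continuous_mdist.
- by exists y => //=; rewrite mdistxx divr_gt0.
have [rho rho0 le_rho] := seq_lower_bound (enum_fset D) (g := fun x => r x / 2)
  (fun x => divr_gt0 (r0 x) (ltr0Sn _ 1)).
exists rho => // y z yz.
have [x /= xD xy] := cover y I.
have xz : mdist x z < r x.
  apply: le_lt_trans (metric_triangle x y z) _.
  by rewrite (splitr (r x)) ltrD // (lt_le_trans yz) ?le_rho.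
have {}xy : mdist x y < r x by have := r0 x; lra.
rewrite (_ : g y - g z = (g x - g z) - (g x - g y)); last by ring.
by apply: le_lt_trans (ler_normB _ _) _; rewrite (splitr th) ltrD ?rP.
Qed.

End topology.

Section extended_reals.
Context {R : realType}.
Local Open Scope ereal_scope.

Lemma lne_ratio_lt (m : \bar R) (S t : R) : (0 < S)%R ->
  - lne m * (S^-1)%:E < t%:E -> (expR (- (t * S)))%:E < m.
Proof.
move=> S0; case: m => [r| |] /=.
- case: ifPn => [r0|]; first by rewrite /= gt0_mulye ?lte_fin ?invr_gt0 // ltNge leey.
  rewrite -ltNge => r0; rewrite -EFinM !lte_fin ltr_pdivrMr // => lnr.
  by rewrite -[ltRHS](lnK r0) ltr_expR; lra.
- by rewrite ltry.
- by rewrite /= gt0_mulye ?lte_fin ?invr_gt0 // ltNge leey.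
Qed.

Lemma lne_ratio_gt (m : \bar R) (S t : R) : (0 < S)%R -> 0 <= m ->
  t%:E < - lne m * (S^-1)%:E -> m <= (expR (- (t * S)))%:E.
Proof.
move=> S0; case: m => [r| |] //= m0.
- case: ifPn => [r0|]; first by rewrite lee_fin (le_trans r0) ?expR_ge0.
  rewrite -ltNge => r0; rewrite -EFinM !lte_fin ltr_pdivlMr // => lnr.
  by rewrite lee_fin -[leLHS](lnK r0) ler_expR; lra.
- by rewrite /= gt0_mulNye ?lte_fin ?invr_gt0 // ltNge leNye.
Qed.

Lemma lne_ratio_le (m1 m2 : \bar R) (c : R) : 0 <= m1 -> m1 <= m2 -> (0 <= c)%R ->
  - lne m2 * c%:E <= - lne m1 * c%:E.
Proof.
move=> m10 m12 c0; rewrite lee_wpmul2r ?lee_fin // leeN2.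
have [->|m2y] := eqVneq m2 +oo; first exact: leey.
by rewrite lee_lne // !in_itv /= ?leey ?andbT ?m10 ?(le_trans m10 m12).
Qed.

Lemma limn_einfE (u : (\bar R)^nat) : limn_einf u = ereal_sup (range (einfs u)).
Proof. by rewrite limn_einf_lim; apply/cvg_lim => //; exact: cvg_einfs_sup. Qed.

Lemma limn_einf_lt (u : (\bar R)^nat) c : limn_einf u < c ->
  forall N, exists2 n, (N <= n)%N & u n < c.
Proof.
rewrite limn_einfE => u_c N.
have /ereal_inf_lt[_ [n /= Nn <-] unc] : einfs u N < c.
  by apply: le_lt_trans u_c; apply: ereal_sup_ubound; exists N.
by exists n.
Qed.

Lemma limn_einf_gt (u : (\bar R)^nat) c : c < limn_einf u ->
  exists N, forall n, (N <= n)%N -> c < u n.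
Proof.
rewrite limn_einfE => /ereal_sup_gt[_ [N _ <-] c_u]; exists N => n Nn.
by apply: lt_le_trans c_u _; apply: ereal_inf_lbound; exists n.
Qed.

Lemma le_limn_einf (u v : (\bar R)^nat) : (forall n, u n <= v n) ->
  limn_einf u <= limn_einf v.
Proof.
move=> uv; rewrite !limn_einfE; apply: ge_ereal_sup => _ [N _ <-].
apply: (@le_trans _ _ (einfs v N)); last by apply: ereal_sup_ubound; exists N.
apply: le_ereal_inf_tmp => _ [n /= Nn <-].
by apply: le_trans (uv n); apply: ereal_inf_lbound; exists n.
Qed.

Lemma nonincreasing_lim_at_right0 (g : R -> \bar R) :
  (forall a b, (0 < a)%R -> (a <= b)%R -> g b <= g a) ->
  lim (g e @[e --> 0%R^'+]) = ereal_sup (g @` [set e | (0 < e)%R]).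
Proof.
move=> g_anti; apply/cvg_lim => //.
have -> : [set e | (0 < e)%R] = [set` Interval (BRight 0%R) (BInfty R false)].
  by apply/seteqP; split => x /=; rewrite in_itv /= andbT.
apply: (@nonincreasing_at_right_cvge R g 0%R (BInfty _ false) isT).
by move=> a b; rewrite !in_itv /= !andbT => a0 _; apply: g_anti.
Qed.

End extended_reals.

Section ball_weight.
Context {R : realType} {X : pmetricType R} (f : X -> X) (alpha : R) (phi : X -> R).
Hypothesis phi_gt0 : forall x, 0 < phi x.
Local Open Scope ereal_scope.

Local Notation S := (birkhoff_sum f phi).
Local Notation W := (ball_weight f alpha phi).
Local Notation sup_S e n x :=
  (ereal_sup [set (S n%N y)%:E | y in bowen_ball f alpha n%N x e]).

Let birkhoff_sum_le_sup e n x : (0 < e)%R -> (S n x)%:E <= sup_S e n x.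
Proof. by move=> e0; apply: ereal_sup_ubound; exists x => //; apply: bowen_ball_center. Qed.

Let sup_S_ge0 e n x : (0 < e)%R -> 0 <= sup_S e n x.
Proof.
move=> e0; apply: le_trans (birkhoff_sum_le_sup n x e0).
by rewrite lee_fin birkhoff_sum_ge0 // => y; apply/ltW.
Qed.

Let expeR_le (t : R) (a b : \bar R) : (0 <= t)%R -> a <= b ->
  expeR ((- t)%:E * b) <= expeR ((- t)%:E * a).
Proof. by move=> t0 ab; rewrite lee_expeR EFinN !mulNe leeN2 lee_wpmul2l. Qed.

Let EFin_expR_mulN (t c : R) : (expR (- (t * c)))%:E = expeR ((- t)%:E * c%:E).
Proof. by rewrite -EFinM mulNr. Qed.

Lemma ball_weight_ge0 t e n x : 0 <= W t e n x.
Proof. exact: expeR_ge0. Qed.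

Lemma ball_weight_le t e n x : (0 <= t)%R -> (0 < e)%R ->
  W t e n x <= (expR (- (t * S n x)))%:E.
Proof.
move=> t0 e0; rewrite EFin_expR_mulN; apply: expeR_le => //.
exact: birkhoff_sum_le_sup.
Qed.

Lemma ball_weight_ge t e n x c : (0 <= t)%R -> sup_S e n x <= c%:E ->
  (expR (- (t * c)))%:E <= W t e n x.
Proof. by move=> t0 sup_c; rewrite EFin_expR_mulN; apply: expeR_le. Qed.

Lemma le_ball_weight_exponent t1 t2 e n x : (0 < e)%R -> (t1 <= t2)%R ->
  W t2 e n x <= W t1 e n x.
Proof. by move=> e0 t12; rewrite lee_expeR lee_wpmul2r ?sup_S_ge0 ?lee_fin ?lerN2. Qed.

Lemma le_ball_weight_radius t e1 e2 n x : (0 <= t)%R -> (e1 <= e2)%R ->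
  W t e2 n x <= W t e1 n x.
Proof.
move=> t0 e12; apply: expeR_le => //.
apply: ereal_sup_le => _ [y /= y_ball <-]; exists y => //.
exact: sub_bowen_ball_radius y_ball.
Qed.

Lemma ball_weight_ge1 t e n x : (0 < e)%R -> (t <= 0)%R -> 1 <= W t e n x.
Proof.
by move=> e0 t0; rewrite -expeR0 lee_expeR mule_ge0 ?sup_S_ge0 ?lee_fin ?oppr_ge0.
Qed.

End ball_weight.

Section caratheodory_construction.
Context {R : realType} {X : pmetricType R} (f : X -> X) (alpha : R) (phi : X -> R).
Hypothesis phi_gt0 : forall x, 0 < phi x.
Variable K : set X.
Local Open Scope ereal_scope.

Local Notation W := (ball_weight f alpha phi).
Local Notation Mn := (M_n f alpha phi K).
Local Notation Ms := (M_s f alpha phi K).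
Local Notation Me := (M_eps f alpha phi K).
Local Notation B := (bowen_ball f alpha).

Lemma M_n_le t e n (I : set nat) (ns : nat -> nat) (xs : nat -> X) :
  (forall i, I i -> (n <= ns i)%N) -> K `<=` \bigcup_(i in I) B (ns i) (xs i) e ->
  Mn t e n <= \esum_(i in I) W t e (ns i) (xs i).
Proof. by move=> ns_ge K_cover; apply: ereal_inf_lbound; exists I, ns, xs. Qed.

Lemma le_M_n t e n c :
  (forall (I : set nat) (ns : nat -> nat) (xs : nat -> X),
     (forall i, I i -> (n <= ns i)%N) -> K `<=` \bigcup_(i in I) B (ns i) (xs i) e ->
     c <= \esum_(i in I) W t e (ns i) (xs i)) ->
  c <= Mn t e n.
Proof. by move=> c_le; apply: le_ereal_inf_tmp => _ [I [ns [xs [? ? ->]]]]; apply: c_le. Qed.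

Lemma M_n_ge0 t e n : 0 <= Mn t e n.
Proof. by apply: le_M_n => I ns xs _ _; apply: esum_ge0 => i _; apply: ball_weight_ge0. Qed.

Lemma le_M_n_length t e n1 n2 : (n1 <= n2)%N -> Mn t e n1 <= Mn t e n2.
Proof.
move=> n12; apply: le_M_n => I ns xs ns_ge K_cover; apply: M_n_le => // i Ii.
exact: leq_trans n12 (ns_ge i Ii).
Qed.

Lemma M_sE t e : Ms t e = ereal_sup (range (Mn t e)).
Proof.
apply/cvg_lim => //; apply: ereal_nondecreasing_cvgn => n1 n2.
exact: le_M_n_length.
Qed.

Lemma M_n_le_M_s t e n : Mn t e n <= Ms t e.
Proof. by rewrite M_sE; apply: ereal_sup_ubound; exists n. Qed.

Lemma M_s_le t e c : (forall n, Mn t e n <= c) -> Ms t e <= c.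
Proof. by move=> le_c; rewrite M_sE; apply: ge_ereal_sup => _ [n _ <-]. Qed.

Lemma M_s_ge0 t e : 0 <= Ms t e.
Proof. exact: le_trans (M_n_ge0 t e 0) (M_n_le_M_s t e 0). Qed.

Lemma M_s_set0 t e : K = set0 -> Ms t e = 0.
Proof.
move=> K0; apply/eqP; rewrite eq_le M_s_ge0 andbT; apply: M_s_le => n.
rewrite -(esum_set0 (fun i : nat => W t e i point)).
by apply: (@M_n_le t e n set0 id (fun=> point)) => //; rewrite K0.
Qed.

Lemma M_s_ge1 t e : K !=set0 -> (0 < e)%R -> (t <= 0)%R -> 1 <= Ms t e.
Proof.
move=> [x Kx] e0 t0; apply: le_trans (M_n_le_M_s t e 0).
apply: le_M_n => I ns xs _ K_cover; have [i Ii _] := K_cover x Kx.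
apply: esum_ge; exists [set i]; first by split; [exact: finite_set1 | move=> j ->].
by rewrite fsbig_set1; apply: ball_weight_ge1.
Qed.

Lemma le_M_s_radius t e1 e2 : (0 <= t)%R -> (e1 <= e2)%R -> Ms t e2 <= Ms t e1.
Proof.
move=> t0 e12; apply: M_s_le => n; apply: le_trans (M_n_le_M_s t e1 n).
apply: le_M_n => I ns xs ns_ge K_cover.
apply: le_trans (@M_n_le t e2 n I ns xs ns_ge _) _.
  by move=> x /K_cover[i Ii x_ball]; exists i => //; exact: sub_bowen_ball_radius x_ball.
by apply: le_esum => i _; apply: le_ball_weight_radius.
Qed.

Lemma le_M_s_exponent t1 t2 e : (0 < e)%R -> (t1 <= t2)%R -> Ms t2 e <= Ms t1 e.
Proof.
move=> e0 t12; apply: M_s_le => n; apply: le_trans (M_n_le_M_s t1 e n).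
apply: le_M_n => I ns xs ns_ge K_cover.
apply: le_trans (M_n_le t2 ns_ge K_cover) _.
by apply: le_esum => i _; apply: le_ball_weight_exponent.
Qed.

Lemma M_eps_le e s : Ms s e = 0 -> Me e <= s%:E.
Proof. by move=> Ms0; apply: ereal_inf_lbound; exists s. Qed.

Lemma M_eps_ge e c : (forall s, Ms s e = 0 -> c <= s%:E) -> c <= Me e.
Proof. by move=> c_le; apply: le_ereal_inf_tmp => _ [s Ms0 <-]; apply: c_le. Qed.

(* For nonempty K the critical exponent is positive, and above it M_s
   decreases in the radius. *)
Lemma le_M_eps_radius e1 e2 : (0 < e1)%R -> (e1 <= e2)%R -> Me e2 <= Me e1.
Proof.
move=> e10 e12; have [K0|/set0P K_neq0] := eqVneq K set0.
  rewrite /M_eps le_eqVlt; apply/orP; left; apply/eqP; congr ereal_inf.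
  by apply/seteqP; split => _ [s _ <-]; exists s => //=; rewrite M_s_set0.
apply: M_eps_ge => s Ms0; apply: M_eps_le.
have s0 : (0 < s)%R.
  rewrite ltNge; apply/negP => s_le0.
  by have := M_s_ge1 K_neq0 e10 s_le0; rewrite Ms0 lee_fin ler10.
apply/eqP; rewrite eq_le M_s_ge0 andbT -Ms0.
by apply: le_M_s_radius => //; exact: ltW.
Qed.

Lemma dim_BSE : dim_BS f alpha phi K = ereal_sup (Me @` [set e | (0 < e)%R]).
Proof. by apply: nonincreasing_lim_at_right0 => a b; apply: le_M_eps_radius. Qed.

End caratheodory_construction.

Section greedy_cover.
Variables (R : realType) (X : pmetricType R) (f : X -> X) (alpha : R) (phi : X -> R)
  (mu : probability (@borel_type R X) R) (t eps : R) (N : nat) (phi_max : R).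
Hypotheses (fc : continuous f) (t0 : (0 < t)%R) (eps0 : (0 < eps)%R)
  (phi_le : forall x, (phi x <= phi_max)%R).
Local Open Scope ereal_scope.

Local Notation S := (birkhoff_sum f phi).

Definition ball_of (p : nat * X) := bowen_ball f alpha p.1 p.2 eps.

Definition heavy n y := (N <= n)%N /\ (expR (- (t * S n y)))%:E <= mu (ball_of (n, y)).

Fixpoint balls_union (L : seq (nat * X)) : set X :=
  if L is p :: L then ball_of p `|` balls_union L else set0.

Fixpoint balls_disjoint (L : seq (nat * X)) : Prop :=
  if L is p :: L then ball_of p `&` balls_union L = set0 /\ balls_disjoint L else True.

Lemma measurable_ball_of p : measurable (ball_of p : set (@borel_type R X)).
Proof. exact: measurable_bowen_ball. Qed.

Lemma measurable_balls_union L : measurable (balls_union L : set (@borel_type R X)).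
Proof. by elim: L => [|p L IH] //=; apply: measurableU => //; apply: measurable_ball_of. Qed.

Lemma balls_union_cat L1 L2 : balls_union (L1 ++ L2) = balls_union L1 `|` balls_union L2.
Proof. by elim: L1 => [|p L IH] /=; rewrite ?set0U // IH setUA. Qed.

Lemma balls_union_mem L z : balls_union L z -> exists2 p, p \in L & ball_of p z.
Proof.
elim: L => [|a L IH] //= [z_a|/IH[p pL z_p]]; first by exists a; rewrite ?mem_head.
by exists p; rewrite // in_cons pL orbT.
Qed.

Lemma balls_disjoint_catr L1 L2 : balls_disjoint (L1 ++ L2) -> balls_disjoint L2.
Proof. by elim: L1 => [|p L IH] //= [_ /IH]. Qed.

Lemma balls_disjoint_rcons L p : balls_disjoint L ->
  ball_of p `&` balls_union L = set0 -> balls_disjoint (rcons L p).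
Proof.
elim: L => [|a L IH] /=; first by move=> _ ->.
move=> [a_L L_disj]; rewrite setIUr setU_eq0 => -[pa pL]; split; last exact: IH.
by rewrite -cats1 balls_union_cat /= setU0 setIUr a_L set0U setIC.
Qed.

Lemma sum_balls_le1 L : balls_disjoint L -> \sum_(p <- L) mu (ball_of p) <= 1.
Proof.
have mu_union L' : balls_disjoint L' -> mu (balls_union L') = \sum_(p <- L') mu (ball_of p).
  elim: L' => [|p L' IH] /=; first by rewrite big_nil measure0.
  move=> [p_L' L'_disj]; rewrite big_cons -IH // measureU //.
  + exact: measurable_ball_of.
  + exact: measurable_balls_union.
move=> L_disj; rewrite -mu_union //; apply: probability_le1.
exact: measurable_balls_union.
Qed.

Definition good_layer n L (T : seq X) :=
  (forall y, y \in T -> heavy n y) /\ balls_disjoint (L ++ map (pair n) T).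

Definition maximal_layer n L (T : seq X) :=
  forall y, heavy n y -> exists z, ball_of (n, y) z /\ balls_union (L ++ map (pair n) T) z.

(* Heavy balls of length n have mass at least exp(- t n phi_max), so a disjoint
   layer of them is short. *)
Lemma size_good_layer n L T : good_layer n L T ->
  ((size T)%:R * expR (- (t * (n%:R * phi_max))) <= 1)%R.
Proof.
move=> [T_heavy T_disj]; have := sum_balls_le1 (balls_disjoint_catr T_disj).
rewrite big_map; set c := expR _.
have : \sum_(y <- T) c%:E <= \sum_(y <- T) mu (ball_of (n, y)).
  rewrite big_seq [leRHS]big_seq; apply: lee_sum => y /T_heavy[_].
  apply: le_trans; rewrite lee_fin ler_expR lerN2 ler_wpM2l ?(ltW t0) //.
  exact: birkhoff_sum_le.
move=> sum_le /(le_trans sum_le).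
by rewrite sumEFin lee_fin big_const_seq iter_addr addr0 count_predT mulr_natl.
Qed.

Lemma exists_maximal_layer n L : balls_disjoint L ->
  exists T, good_layer n L T /\ maximal_layer n L T.
Proof.
move=> L_disj; apply: contrapT => no_max.
have long_layer k : exists T, size T = k /\ good_layer n L T.
  elim: k => [|k [T [sizeT [T_heavy T_disj]]]].
    by exists [::]; split => //; split => //; rewrite cats0.
  have /existsNP[y /not_implyP[y_heavy y_far]] : ~ maximal_layer n L T.
    by move=> T_max; apply: no_max; exists T.
  exists (rcons T y); split; first by rewrite size_rcons sizeT.
  split; first by move=> z; rewrite mem_rcons in_cons => /orP[/eqP->|/T_heavy].
  rewrite map_rcons -rcons_cat; apply: balls_disjoint_rcons => //.
  by apply/seteqP; split => z // [? ?]; apply: y_far; exists z.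
pose c := expR (t * (n%:R * phi_max)).
have [T [sizeT T_good]] := long_layer (Num.truncn c).+1.
have := size_good_layer T_good; rewrite sizeT expRN ler_pdivrMr ?expR_gt0 // mul1r.
by rewrite -truncn_ge_nat ?expR_ge0 // ltnn.
Qed.

Definition layer n L := xget [::] [set T | good_layer n L T /\ maximal_layer n L T].

Fixpoint selection k :=
  if k is k.+1 then selection k ++ map (pair k) (layer k (selection k)) else [::].

Lemma selection_inv k : balls_disjoint (selection k) /\
  forall p, p \in selection k -> heavy p.1 p.2 /\ (p.1 < k)%N.
Proof.
elim: k => [|k [disj_k heavy_k]] //=.
have [[T_heavy T_disj] _] := xgetPex [::] (exists_maximal_layer k disj_k).
split => // p; rewrite mem_cat => /orP[/heavy_k[? ?]|/mapP[y /T_heavy ? ->]] //.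
by split => //; apply: ltnW.
Qed.

Lemma maximal_layer_selection k : maximal_layer k (selection k) (layer k (selection k)).
Proof. by have [_] := xgetPex [::] (exists_maximal_layer k (selection_inv k).1). Qed.

Lemma selection_prefix k1 k2 : (k1 <= k2)%N ->
  exists post, selection k2 = selection k1 ++ post.
Proof.
elim: k2 => [|k2 IH]; first by rewrite leqn0 => /eqP->; exists [::]; rewrite cats0.
rewrite leq_eqVlt => /orP[/eqP->|]; first by exists [::]; rewrite cats0.
rewrite ltnS => /IH[post post_eq].
by exists (post ++ map (pair k2) (layer k2 (selection k2))); rewrite /= post_eq catA.
Qed.

(* The selections form an increasing chain of lists; [selected i] is the i-th
   entry of its limit. *)
Definition selected_index := [set i | exists k, (i < size (selection k))%N].
Definition selection_stage i := xget 0%N [set k | (i < size (selection k))%N].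
Definition selected i := nth (0%N, point) (selection (selection_stage i)) i.

Lemma selection_stageP i : selected_index i -> (i < size (selection (selection_stage i)))%N.
Proof.
by move=> [k ik]; exact: (xgetPex 0%N (ex_intro (fun k => (i < size (selection k))%N) k ik)).
Qed.

Lemma selected_nth i k : (i < size (selection k))%N ->
  selected i = nth (0%N, point) (selection k) i.
Proof.
move=> ik; have ik' := selection_stageP (ex_intro _ k ik).
have nth_prefix k1 k2 : (k1 <= k2)%N -> (i < size (selection k1))%N ->
    nth (0%N, point) (selection k1) i = nth (0%N, point) (selection k2) i.
  by move=> /selection_prefix[post ->] ik1; rewrite nth_cat ik1.
rewrite /selected; case: (leqP k (selection_stage i)) => [le_k|/ltnW lt_k].
  by rewrite (nth_prefix _ _ le_k ik).
by rewrite (nth_prefix _ _ lt_k ik').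
Qed.

Lemma heavy_selected i : selected_index i -> heavy (selected i).1 (selected i).2.
Proof.
move=> /selection_stageP i_lt.
by have [_ /(_ _ (mem_nth (0%N, point) i_lt))[]] := selection_inv (selection_stage i).
Qed.

(* Every heavy ball meets a selected ball of no greater length, so doubling the
   radius covers its centre. *)
Lemma selected_cover (K : set X) : (forall x, K x -> exists n, heavy n x) ->
  K `<=` \bigcup_(i in selected_index)
           bowen_ball f alpha (selected i).1 (selected i).2 (2 * eps).
Proof.
move=> K_heavy x /K_heavy[n x_heavy].
have [z [xz /balls_union_mem[p p_sel pz]]] := maximal_layer_selection x_heavy.
have p_sel' : p \in selection n.+1 by [].
have [_ /(_ _ p_sel')[_ pn]] := selection_inv n.+1.
have p_idx : (index p (selection n.+1) < size (selection n.+1))%N by rewrite index_mem.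
exists (index p (selection n.+1)); first by exists n.+1.
rewrite (selected_nth p_idx) nth_index // mulr2n mulrDl mul1r.
apply: bowen_ball_triangle pz _; rewrite bowen_ballC.
by apply: sub_bowen_ball_length xz; rewrite -ltnS.
Qed.

Lemma esum_selected_le (m dl : R) : (0 <= m)%R -> (forall x, m <= phi x)%R -> (0 < dl)%R ->
  \esum_(i in selected_index)
     ball_weight f alpha phi (t + dl) (2 * eps) (selected i).1 (selected i).2
    <= (expR (- (dl * (N%:R * m))))%:E.
Proof.
move=> m0 m_le dl0; set C := expR _.
have weight_le i : selected_index i ->
    ball_weight f alpha phi (t + dl) (2 * eps) (selected i).1 (selected i).2
    <= mu (ball_of (selected i)) * C%:E.
  move=> /heavy_selected[Nn i_heavy].
  have t_dl0 : (0 <= t + dl)%R by rewrite addr_ge0 ?ltW.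
  apply: le_trans (ball_weight_le f alpha phi _ _ t_dl0 (mulr_gt0 _ eps0)) _ => //.
  rewrite mulrDl opprD expRD EFinM lee_pmul ?lee_fin ?expR_ge0 // ler_expR lerN2.
  rewrite ler_wpM2l ?(ltW dl0) // (le_trans _ (birkhoff_sum_ge f _ _ m_le)) //.
  by rewrite ler_wpM2r // ler_nat.
apply: le_trans (le_esum weight_le) _.
apply: ge_ereal_sup => _ [F [finF F_idx] <-].
rewrite fsbig_finite //; set Fs := fset_set F.
pose k := (\max_(i <- Fs) selection_stage i)%N.
have Fs_prefix : [set` Fs] `<=` `I_(size (selection k)).
  move=> i /= iF; have /F_idx Fi : F i by move: iF; rewrite in_fset_set // => /set_mem.
  have /selection_prefix[post ->] : (selection_stage i <= k)%N.
    exact: (leq_bigmax_seq (F := selection_stage) i iF isT).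
  by rewrite size_cat (leq_trans (selection_stageP Fi)) ?leq_addr.
apply: le_trans (lee_sum_fset_nat _ _ _ _ Fs_prefix) _.
  by move=> i _; rewrite mule_ge0 ?lee_fin ?expR_ge0.
rewrite big_nat_cond
  (eq_bigr (fun i => mu (ball_of (nth (0%N, point) (selection k) i)) * C%:E));
  last by move=> i /andP[/andP[_ ik] _]; rewrite (selected_nth ik).
rewrite -big_nat_cond -(big_nth _ xpredT (fun p => mu (ball_of p) * C%:E)).
rewrite -ge0_sume_distrl; last by move=> p _; apply: measure_ge0.
rewrite -[leRHS]mul1e lee_wpmul2r ?lee_fin ?expR_ge0 //.
exact: sum_balls_le1 (selection_inv k).1.
Qed.

End greedy_cover.

Lemma mu_ext_bigcup2_gt0 d (T : semiRingOfSetsType d) (R : realType)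
    (mu : {measure set T -> \bar R}) (K : set T) (A : nat -> nat -> set T) :
  measurable K -> (0 < mu K)%E -> K `<=` \bigcup_j \bigcup_N A j N ->
  exists j N, (0 < mu_ext mu (A j N))%E.
Proof.
move=> mK muK K_cover; apply: contrapT => A_pos.
have A_null j N : mu_ext mu (A j N) = 0%E.
  apply/eqP; rewrite eq_le mu_ext_ge0 ?andbT // leNgt; apply/negP => ?.
  by apply: A_pos; exists j, N.
suff : (mu K <= 0)%E by rewrite leNgt muK.
rewrite -(measurable_mu_extE mu mK).
apply: le_trans (le_mu_ext mu K_cover) _.
apply: le_trans (mu_ext_sigma_subadditive (measure_ge0 mu) _) _.
rewrite eseries0 // => j _ _; apply/eqP; rewrite eq_le mu_ext_ge0 ?andbT //.
apply: le_trans (mu_ext_sigma_subadditive (measure_ge0 mu) _) _.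
by rewrite eseries0 // => N _ _; rewrite A_null.
Qed.

Section mass_distribution.
Variables (R : realType) (X : pmetricType R) (f : X -> X) (alpha : R) (phi : X -> R)
  (mu : probability (@borel_type R X) R) (K K' : set X)
  (m e r rho th beta t : R) (N : nat).
Hypotheses (fc : continuous f) (alpha0 : (0 <= alpha)%R)
  (m_le : forall x, (m <= phi x)%R)
  (K'K : K' `<=` K) (r2e : (r + r <= e)%R) (r2rho : (r + r <= rho)%R)
  (phi_near : forall y z, (mdist y z < rho)%R -> (`|phi y - phi z| < th)%R)
  (t0 : (0 <= t)%R) (t_le : (t <= beta)%R) (margin : (t * th <= (beta - t) * m)%R)
  (K'_decay : forall x, K' x -> forall n, (N <= n)%N ->
     (mu (bowen_ball f alpha n x e) <= (expR (- (beta * birkhoff_sum f phi n x)))%:E)%E).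
Local Open Scope ereal_scope.

Local Notation S := (birkhoff_sum f phi).
Local Notation B := (bowen_ball f alpha).

(* The balls of radius [e] around points of [K'] decay at rate [beta > t]; the
   margin absorbs the oscillation of [S n] on a ball of radius [r]. *)
Lemma measure_ball_le_weight n y x : (N <= n)%N -> K' y -> B n x r y ->
  mu (B n x r) <= ball_weight f alpha phi t r n x.
Proof.
move=> Nn K'y xy; rewrite bowen_ballC in xy.
have ball_sub : B n x r `<=` B n y e.
  move=> z /(bowen_ball_triangle xy); exact: sub_bowen_ball_radius.
have : mu (B n x r) <= mu (B n y e).
  by apply: le_measure => //; apply/mem_set; apply: measurable_bowen_ball.
move=> /le_trans; apply.
apply: le_trans (K'_decay K'y Nn) _.
apply: le_trans (@ball_weight_ge _ _ f alpha phi t r n x (S n y + n%:R * th) t0 _).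
  rewrite lee_fin ler_expR lerN2 mulrDr.
  have : (t * (n%:R * th) <= (beta - t) * S n y)%R.
    rewrite mulrCA (le_trans (ler_wpM2l (ler0n _ n) margin)) // mulrCA.
    by rewrite ler_wpM2l ?subr_ge0 // birkhoff_sum_ge.
  lra.
apply: ge_ereal_sup => _ [z xz <-]; rewrite lee_fin.
apply: (birkhoff_sum_le_near alpha0 phi_near).
exact: lt_le_trans (bowen_ball_triangle xy xz) r2rho.
Qed.

Lemma mu_ext_le_M_n n : (N <= n)%N -> mu_ext mu K' <= M_n f alpha phi K t r n.
Proof.
move=> Nn; apply: le_M_n => I ns xs ns_ge K_cover.
pose I' := [set i | I i /\ exists2 y, K' y & B (ns i) (xs i) r y].
pose F i := if `[< I' i >] then B (ns i) (xs i) r else set0.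
have mF i : measurable (F i : set (@borel_type R X)).
  by rewrite /F; case: asboolP => _ //; apply: measurable_bowen_ball.
apply: le_trans (_ : _ <= \sum_(k <oo) mu (F k)) _.
  apply: ereal_inf_lbound; exists F => //; split => // y K'y.
  have [i Ii y_ball] := K_cover y (K'K K'y); exists i => //.
  by rewrite /F; case: asboolP => // -[]; split => //; exists y.
rewrite nneseries_esumT; last by move=> k; apply: measure_ge0.
rewrite [leRHS]esum_mkcond; apply: le_esum => i _.
rewrite /F; case: asboolP => [[Ii [y K'y y_ball]]|_].
  rewrite ifT; last exact/mem_set.
  by apply: measure_ball_le_weight K'y y_ball; apply: leq_trans Nn (ns_ge i Ii).
by rewrite measure0; case: ifP => _ //; apply: ball_weight_ge0.
Qed.

End mass_distribution.

Section local_entropy.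
Variables (R : realType) (X : pmetricType R) (f : X -> X) (alpha : R) (phi : X -> R)
  (mu : probability (@borel_type R X) R) (m : R).
Hypotheses (fc : continuous f) (phi_gt0 : forall x, 0 < phi x)
  (m0 : 0 < m) (m_le : forall x, m <= phi x).
Local Open Scope ereal_scope.

Local Notation S := (birkhoff_sum f phi).
Local Notation B := (bowen_ball f alpha).

Definition local_BK_entropy_at x eps :=
  limn_einf (fun n => - lne (mu (B n x eps)) * ((S n x)^-1)%:E).

Lemma le_local_BK_entropy_at x a b : (0 < a)%R -> (a <= b)%R ->
  local_BK_entropy_at x b <= local_BK_entropy_at x a.
Proof.
move=> a0 ab; apply: le_limn_einf => n; apply: lne_ratio_le.
- exact: measure_ge0.
- apply: le_measure; try by apply/mem_set; apply: measurable_bowen_ball.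
  exact: sub_bowen_ball_radius.
- by rewrite invr_ge0 birkhoff_sum_ge0 // => y; apply/ltW.
Qed.

Lemma local_BK_entropyE x : local_BK_entropy f alpha phi mu x =
  ereal_sup (local_BK_entropy_at x @` [set e | (0 < e)%R]).
Proof.
exact: (@nonincreasing_lim_at_right0 _ (local_BK_entropy_at x) (le_local_BK_entropy_at x)).
Qed.

Lemma local_BK_entropy_at_le x e : (0 < e)%R ->
  local_BK_entropy_at x e <= local_BK_entropy f alpha phi mu x.
Proof. by move=> e0; rewrite local_BK_entropyE; apply: ereal_sup_ubound; exists e. Qed.

Lemma exists_heavy_ball x s dl eps N : (0 < dl)%R -> (0 < eps)%R -> (0 < N)%N ->
  local_BK_entropy f alpha phi mu x <= s%:E ->
  exists n, heavy f alpha phi mu (s + dl) eps N n x.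
Proof.
move=> dl0 eps0 N0 Px.
have /limn_einf_lt/(_ N)[n Nn ratio_lt] : local_BK_entropy_at x eps < (s + dl)%:E.
  by apply: le_lt_trans (le_trans (local_BK_entropy_at_le x eps0) Px) _; rewrite lte_fin ltrDl.
exists n; split => //; apply/ltW; apply: lne_ratio_lt ratio_lt.
exact: (birkhoff_sum_gt0 f x m0 m_le (leq_trans N0 Nn)).
Qed.

Lemma local_BK_entropy_gt_decay x beta : beta%:E < local_BK_entropy f alpha phi mu x ->
  exists j N, forall n, (N <= n)%N ->
    mu (B n x j.+1%:R^-1) <= (expR (- (beta * S n x)))%:E.
Proof.
rewrite local_BK_entropyE => /ereal_sup_gt[_ [e e0 <-] beta_lt].
pose j := Num.truncn e^-1.
have je : (j.+1%:R^-1 <= e)%R.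
  rewrite -[leRHS]invrK lef_pV2 ?posrE ?invr_gt0 ?ltr0Sn //.
  by apply/ltW; rewrite -truncn_le_nat.
have /limn_einf_gt[N N_lt] : beta%:E < local_BK_entropy_at x j.+1%:R^-1.
  by apply: lt_le_trans beta_lt (le_local_BK_entropy_at _ _ je); rewrite invr_gt0.
exists j, (maxn N 1) => n; rewrite geq_max => /andP[Nn n0].
apply: lne_ratio_gt; first exact: (birkhoff_sum_gt0 f x m0 m_le n0).
  exact: measure_ge0.
exact: N_lt.
Qed.

End local_entropy.

Lemma exists_expRN_le {R : realType} (c eta : R) n0 : 0 < c -> 0 < eta ->
  exists N, [/\ (n0 <= N)%N, (0 < N)%N & expR (- (c * N%:R)) <= eta].
Proof.
move=> c0 eta0; pose N := maxn (maxn n0 1) (Num.truncn (- ln eta / c)).+1.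
exists N; split; rewrite ?leq_max ?leqnn ?orbT //.
have : - ln eta / c < N%:R.
  apply: lt_le_trans (_ : _ < (Num.truncn (- ln eta / c)).+1%:R) _.
    by rewrite -truncn_le_nat.
  by rewrite ler_nat leq_max leqnn orbT.
by rewrite ltr_pdivrMr // -[leRHS]lnK ?posrE // ler_expR => ?; lra.
Qed.

Section upper_bound.
Variables (R : realType) (X : pmetricType R) (f : X -> X) (alpha : R) (phi : X -> R)
  (mu : probability (@borel_type R X) R) (K : set X) (m phi_max s : R).
Hypotheses (fc : continuous f) (phi_gt0 : forall x, 0 < phi x)
  (m0 : 0 < m) (m_le : forall x, m <= phi x) (phi_le : forall x, phi x <= phi_max)
  (s0 : 0 < s) (K_le : forall x, K x -> (local_BK_entropy f alpha phi mu x <= s%:E)%E).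
Local Open Scope ereal_scope.

(* The selected balls of length at least N have total weight at most
   exp(- dl m N) at exponent s + 2 dl. *)
Lemma M_s_above_eq0 dl eps : (0 < dl)%R -> (0 < eps)%R ->
  M_s f alpha phi K (s + dl + dl) (2 * eps) = 0.
Proof.
move=> dl0 eps0; apply/eqP; rewrite eq_le M_s_ge0 andbT; apply: M_s_le => n0.
apply/lee_addgt0Pr => eta eta0; rewrite add0e.
have [N [n0N N0 expN_le]] := exists_expRN_le n0 (mulr_gt0 dl0 m0) eta0.
apply: le_trans (le_M_n_length _ _ _ _ _ _ n0N) _.
have sdl0 : (0 < s + dl)%R by rewrite addr_gt0.
have K_heavy x : K x -> exists n, heavy f alpha phi mu (s + dl) eps N n x.
  by move=> Kx; apply: (exists_heavy_ball fc phi_gt0 m0 m_le dl0 eps0 N0 (K_le Kx)).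
apply: le_trans (M_n_le _ _ _ (selected_cover fc sdl0 phi_le K_heavy)) _.
  by move=> i /(heavy_selected fc sdl0 phi_le)[].
apply: le_trans (esum_selected_le _ _ _ fc sdl0 eps0 phi_le (ltW m0) m_le dl0) _.
by rewrite lee_fin (le_trans _ expN_le) // mulrA mulrAC.
Qed.

Lemma dim_BS_le_local_entropy : dim_BS f alpha phi K <= s%:E.
Proof.
rewrite (dim_BSE _ _ phi_gt0); apply: ge_ereal_sup => _ [e e0 <-].
apply/lee_addgt0Pr => ep ep0.
have -> : e = (2 * (e / 2))%R by rewrite mulrC divfK.
rewrite -EFinD [(s + ep)%R](_ : _ = s + ep / 2 + ep / 2)%R; last by rewrite -addrA -splitr.
by apply/M_eps_le/M_s_above_eq0; rewrite divr_gt0.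
Qed.

End upper_bound.

Section lower_bound.
Variables (R : realType) (X : pmetricType R) (f : X -> X) (alpha : R) (phi : X -> R)
  (mu : probability (@borel_type R X) R) (K : set X) (m : R).
Hypotheses (cX : compact [set: X]) (fc : continuous f) (alpha0 : 0 <= alpha)
  (phi_cont : continuous phi) (phi_gt0 : forall x, 0 < phi x)
  (m0 : 0 < m) (m_le : forall x, m <= phi x)
  (mK : measurable (K : set (@borel_type R X))) (muK : (0 < mu K)%E).
Local Open Scope ereal_scope.

Local Notation S := (birkhoff_sum f phi).
Local Notation B := (bowen_ball f alpha).

(* A part of K of positive outer measure decays uniformly at rate beta at a
   fixed scale; mass distribution on it bounds every M_s at exponent t below. *)
Lemma le_dim_BS_lt_local_entropy t beta : (0 < t)%R -> (t < beta)%R ->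
  (forall x, K x -> beta%:E < local_BK_entropy f alpha phi mu x) ->
  t%:E <= dim_BS f alpha phi K.
Proof.
move=> t0 t_beta K_gt.
pose K' j N := [set x | K x /\ forall n, (N <= n)%N ->
  mu (B n x j.+1%:R^-1) <= (expR (- (beta * S n x)))%:E].
have [j [N K'_pos]] : exists j N, 0 < mu_ext mu (K' j N).
  apply: mu_ext_bigcup2_gt0 mK muK _ => x Kx.
  have [j [N decay]] := local_BK_entropy_gt_decay fc phi_gt0 m0 m_le (K_gt x Kx).
  by exists j => //; exists N.
pose e : R := (j.+1%:R^-1)%R; pose th := ((beta - t) * m / t)%R.
have th0 : (0 < th)%R by rewrite !mulr_gt0 ?invr_gt0 ?subr_gt0.
have [rho rho0 phi_near] := compact_unif_continuous cX phi_cont th0.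
pose r := (Num.min e rho / 2)%R.
have r0 : (0 < r)%R by rewrite /r /e divr_gt0 // lt_min rho0 invr_gt0 ltr0Sn.
have r2 : (r + r = Num.min e rho)%R by rewrite /r -splitr.
have M_s_gt0 : 0 < M_s f alpha phi K t r.
  apply: (lt_le_trans K'_pos); apply: (le_trans _ (M_n_le_M_s f alpha phi K t r N)).
  apply: (@mu_ext_le_M_n _ _ f alpha phi mu K (K' j N) m e r rho th beta t N) => //.
  - by move=> x [].
  - by rewrite r2 ge_min lexx.
  - by rewrite r2 ge_min lexx orbT.
  - exact: ltW.
  - exact: ltW.
  - by rewrite /th mulrC divfK ?gt_eqF.
  - by move=> x [].
rewrite (dim_BSE _ _ phi_gt0).
apply: (@le_trans _ _ (M_eps f alpha phi K r)); last by apply: ereal_sup_ubound; exists r.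
apply: M_eps_ge => s Ms0; rewrite lee_fin leNgt; apply/negP => s_lt.
have := le_M_s_exponent f alpha phi_gt0 K r0 (ltW s_lt).
by move=> M_le; have := lt_le_trans M_s_gt0 M_le; rewrite Ms0 ltxx.
Qed.

Lemma dim_BS_ge_local_entropy s : (0 < s)%R ->
  (forall x, K x -> s%:E <= local_BK_entropy f alpha phi mu x) ->
  s%:E <= dim_BS f alpha phi K.
Proof.
move=> s0 K_ge; apply/lee_addgt0Pr => ep ep0.
set d := (Num.min ep s / 2)%R.
have d0 : (0 < d)%R by rewrite divr_gt0 // lt_min ep0 s0.
have [d_ep d_s] : (d <= ep)%R /\ (d < s)%R.
  have min_ep : (Num.min ep s <= ep)%R by rewrite ge_min lexx.
  have min_s : (Num.min ep s <= s)%R by rewrite ge_min lexx orbT.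
  by rewrite /d; split; lra.
rewrite -[s](subrK d) EFinD leeD ?lee_fin //.
apply: (@le_dim_BS_lt_local_entropy _ (s - d / 2)%R); rewrite ?subr_gt0 ?ltrD2l ?ltrN2 //.
- by rewrite ltr_pdivrMr ?ltr_pMr ?ltr1n.
- move=> x Kx; apply: lt_le_trans (K_ge x Kx); rewrite lte_fin ltrBlDr ltrDl.
  by rewrite divr_gt0.
Qed.

End lower_bound.

Theorem mainTheorem7 (R : realType) (X : pmetricType R)
    (f : X -> X) (mu : probability (@borel_type R X) R) (K : set X)
    (alpha : R) (phi : X -> R) :
  compact [set: X] -> continuous f ->
  measurable (K : set (@borel_type R X)) ->
  (0 <= alpha) -> continuous phi -> (forall x, 0 < phi x) ->
  forall s : R, 0 < s ->
    ((forall x, K x -> (local_BK_entropy f alpha phi mu x <= s%:E)%E) ->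
       (dim_BS f alpha phi K <= s%:E)%E)
    /\
    ((forall x, K x -> (s%:E <= local_BK_entropy f alpha phi mu x)%E) ->
       (0 < mu K)%E ->
       (s%:E <= dim_BS f alpha phi K)%E).
Proof.
move=> cX fc mK alpha0 phi_cont phi_gt0 s s0.
have phi_cont_on : {within [set: X], continuous phi} by apply/continuous_subspaceT.
have [x_min _ min_le] := compact_EVT_min (ex_intro _ point I) cX phi_cont_on.
have [x_max _ le_max] := compact_EVT_max (ex_intro _ point I) cX phi_cont_on.
have m_le x : phi x_min <= phi x by apply: min_le; rewrite in_setT.
have le_M x : phi x <= phi x_max by apply: le_max; rewrite in_setT.
split => [K_le | K_ge muK].
  exact: (dim_BS_le_local_entropy fc phi_gt0 (phi_gt0 x_min) m_le le_M s0 K_le).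
exact: (dim_BS_ge_local_entropy cX fc alpha0 phi_cont phi_gt0 (phi_gt0 x_min) m_le
  mK muK s0 K_ge).
Qed.
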